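(* The $b$-coupled spin-oscillator $(M,Z,\omega,F=(L,H))$ is a $b$-integrable system; in particular $\{L,H\}=0$ on all of $M$.
   Context: Fix constants $\rho_1,\rho_2>0$. Let $M=S^2\times\mathbb R^2$, where $S^2\subset\mathbb R^3$ is the unit sphere with coordinates $(x,y,z)$, $x^2+y^2+z^2=1$, and $(u,v)$ are coordinates on $\mathbb R^2$; let $Z=\{z=0\}\times\mathbb R^2$. On $\{|z|<1\}$ use cylindrical coordinates $(\theta,z)$ with $\theta=\arg(x+iy)$; on $\{z\neq0\}$ use $(x,y)$ as coordinates on each open hemisphere. The $b$-symplectic form is $\omega=-\rho_1\,\omega^b_{S^2}+\rho_2\,du\wedge dv$, where $\omega^b_{S^2}=d\theta\wedge\frac{dz}{z}$ on $\{|z|<1\}$ and $\omega^b_{S^2}=\frac{1}{1-x^2-y^2}dx\wedge dy$ on $\{z\ne0\}$. The $b$-coupled spin-oscillator is $F=(L,H)$ with $L=\rho_1\log|z|+\frac{\rho_2}{2}(u^2+v^2)$ and $H=\frac12(xu+yv)$. A $b$-integrable system on a $2n$-dimensional $b$-symplectic manifold $(M,Z,\omega)$ (a manifold with a hypersurface $Z$ and a closed nondegenerate 2-form in the $b$-cotangent bundle, i.e. allowing $\frac{dz}{z}$ terms for a defining function $z$ of $Z$) is an $n$-tuple of $b$-functions (functions locally of the form $c\log|z|+g$, $c\in\mathbb R$, $g$ smooth) that pairwise Poisson-commute for the bracket induced by $\omega$ and whose wedge of differentials, as a $b$-form, is nonzero almost everywhere on $M$ and almost everywhere on $Z$. *)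

From Stdlib Require Import Reals List.
From Coquelicot Require Import Coquelicot.
Open Scope R_scope.

(* Functions on M, given in ambient coordinates (x,y,z,u,v). *)
Definition fnM := R -> R -> R -> R -> R -> R.
Definition fn4 := R -> R -> R -> R -> R.
Definition set4 := R -> R -> R -> R -> Prop.
Definition set3 := R -> R -> R -> Prop.

Inductive dir4 := d1 | d2 | d3 | d4.

Definition pd (i : dir4) (f : fn4) : fn4 := fun a b c d =>
  match i with
  | d1 => Derive (fun s => f s b c d) a
  | d2 => Derive (fun s => f a s c d) b
  | d3 => Derive (fun s => f a b s d) c
  | d4 => Derive (fun s => f a b c s) d
  end.

Definition ex_pd (i : dir4) (f : fn4) (a b c d : R) : Prop :=
  match i with
  | d1 => ex_derive (fun s => f s b c d) a
  | d2 => ex_derive (fun s => f a s c d) b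
  | d3 => ex_derive (fun s => f a b s d) c
  | d4 => ex_derive (fun s => f a b c s) d
  end.

Fixpoint iter_pd (l : list dir4) (f : fn4) : fn4 :=
  match l with nil => f | i :: l' => pd i (iter_pd l' f) end.

Definition cont4_at (f : fn4) (a b c d : R) : Prop :=
  forall eps, 0 < eps -> exists del, 0 < del /\
    forall a' b' c' d', Rabs (a' - a) < del -> Rabs (b' - b) < del ->
      Rabs (c' - c) < del -> Rabs (d' - d) < del ->
      Rabs (f a' b' c' d' - f a b c d) < eps.

(* C^infinity on U: all iterated partial derivatives of all orders exist
   and are continuous at every point of U (U will always be open). *)
Definition smooth_on (U : set4) (f : fn4) : Prop :=
  forall (l : list dir4) a b c d, U a b c d ->
    cont4_at (iter_pd l f) a b c d /\
    forall i, ex_pd i (iter_pd l f) a b c d.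

Definition null4 (S : set4) : Prop :=
  forall eps, 0 < eps -> exists l1 h1 l2 h2 l3 h3 l4 h4 : nat -> R,
    (forall n, l1 n <= h1 n /\ l2 n <= h2 n /\ l3 n <= h3 n /\ l4 n <= h4 n) /\
    (forall N, sum_f_R0 (fun n => (h1 n - l1 n) * (h2 n - l2 n)
                                 * (h3 n - l3 n) * (h4 n - l4 n)) N <= eps) /\
    (forall a b c d, S a b c d -> exists n,
        l1 n <= a <= h1 n /\ l2 n <= b <= h2 n /\
        l3 n <= c <= h3 n /\ l4 n <= d <= h4 n).

Definition null3 (S : set3) : Prop :=
  forall eps, 0 < eps -> exists l1 h1 l2 h2 l3 h3 : nat -> R,
    (forall n, l1 n <= h1 n /\ l2 n <= h2 n /\ l3 n <= h3 n) /\
    (forall N, sum_f_R0 (fun n => (h1 n - l1 n) * (h2 n - l2 n)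
                                 * (h3 n - l3 n)) N <= eps) /\
    (forall a b c, S a b c -> exists n,
        l1 n <= a <= h1 n /\ l2 n <= b <= h2 n /\ l3 n <= c <= h3 n).

(* Hemisphere charts (s = 1: z > 0, s = -1: z < 0), coordinates (x,y,u,v)
   with x^2+y^2 < 1; they cover M \ Z. *)
Definition hemi_dom : set4 := fun a b _ _ => a ^ 2 + b ^ 2 < 1.
Definition hemi (s : R) (f : fnM) : fn4 :=
  fun a b u v => f a b (s * sqrt (1 - a ^ 2 - b ^ 2)) u v.

(* Cylindrical chart on {|z| < 1}: coordinates (theta, z, u, v),
   x = sqrt(1-z^2) cos theta, y = sqrt(1-z^2) sin theta; it contains Z = {z = 0}. *)
Definition cyl_dom : set4 := fun _ t _ _ => Rabs t < 1.
Definition cyl (f : fnM) : fn4 :=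
  fun th t u v => f (sqrt (1 - t ^ 2) * cos th) (sqrt (1 - t ^ 2) * sin th) t u v.

Definition box4 (a b c d r : R) : set4 := fun a' b' c' d' =>
  Rabs (a' - a) < r /\ Rabs (b' - b) < r /\ Rabs (c' - c) < r /\ Rabs (d' - d) < r.

Definition is_bfun (f : fnM) : Prop :=
  (forall s, (s = 1 \/ s = -1) -> smooth_on hemi_dom (hemi s f)) /\
  (forall th t u v, cyl_dom th t u v -> exists r, 0 < r /\ exists (c : R) (g : fn4),
     smooth_on (fun a b c' d => box4 th t u v r a b c' d /\ cyl_dom a b c' d) g /\
     forall a b c' d, box4 th t u v r a b c' d -> cyl_dom a b c' d -> b <> 0 ->
       cyl f a b c' d = c * ln (Rabs b) + g a b c' d).

(* Components of the b-differential of a function in a chart.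
   Hemisphere chart: basis (dx, dy, du, dv).
   Cylindrical chart: b-basis (dtheta, dz/z, du, dv); the dz/z-component is
   (the continuous extension of) z * d/dz. *)
Definition hcomp (F : fn4) (a b u v : R) : dir4 -> R := fun i => pd i F a b u v.
Definition bpd_z (F : fn4) (th t u v : R) : R :=
  real (Lim (fun s => s * Derive (fun r => F th r u v) s) t).
Definition ccomp (F : fn4) (th t u v : R) : dir4 -> R := fun i =>
  match i with d2 => bpd_z F th t u v | _ => pd i F th t u v end.

(* Poisson bracket induced by a (b-)symplectic form
   omega = c1 e1/\e2 + c2 e3/\e4 (e_i the chart (b-)coframe):
   {f,g} = c1^{-1}(f_1 g_2 - f_2 g_1) + c2^{-1}(f_3 g_4 - f_4 g_3). *)
Definition br (c1 c2 : R) (al be : dir4 -> R) : R :=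
  / c1 * (al d1 * be d2 - al d2 * be d1) + / c2 * (al d3 * be d4 - al d4 * be d3).

(* coefficients of omega = -rho1 omega^b_{S^2} + rho2 du/\dv in the charts *)
Definition omega_hem (rho1 a b : R) : R := - rho1 / (1 - a ^ 2 - b ^ 2).
Definition omega_cyl (rho1 : R) : R := - rho1.

Definition wedge_zero (al be : dir4 -> R) : Prop :=
  forall i j, al i * be j - al j * be i = 0.

Definition b_integrable (rho1 rho2 : R) (F1 F2 : fnM) : Prop :=
  is_bfun F1 /\ is_bfun F2 /\
  (* {F1,F2} = 0 on all of M (charts cover M) *)
  (forall s, (s = 1 \/ s = -1) -> forall a b u v, hemi_dom a b u v ->
     br (omega_hem rho1 a b) rho2 (hcomp (hemi s F1) a b u v)
        (hcomp (hemi s F2) a b u v) = 0) /\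
  (forall th t u v, cyl_dom th t u v ->
     br (omega_cyl rho1) rho2 (ccomp (cyl F1) th t u v)
        (ccomp (cyl F2) th t u v) = 0) /\
  (* dF1 /\ dF2 <> 0 almost everywhere on M (null in every chart) *)
  (forall s, (s = 1 \/ s = -1) -> null4 (fun a b u v => hemi_dom a b u v /\
     wedge_zero (hcomp (hemi s F1) a b u v) (hcomp (hemi s F2) a b u v))) /\
  null4 (fun th t u v => cyl_dom th t u v /\
     wedge_zero (ccomp (cyl F1) th t u v) (ccomp (cyl F2) th t u v)) /\
  (* ... and almost everywhere on Z = {z = 0}, coordinates (theta,u,v) *)
  null3 (fun th u v =>
     wedge_zero (ccomp (cyl F1) th 0 u v) (ccomp (cyl F2) th 0 u v)).

Definition Lso (rho1 rho2 : R) : fnM := fun x y z u v =>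
  rho1 * ln (Rabs z) + rho2 / 2 * (u ^ 2 + v ^ 2).
Definition Hso : fnM := fun x y z u v => / 2 * (x * u + y * v).

(* In every chart, L and H are built from the coordinates by sums, products, ln, sqrt,
   inverses, cos and sin (in the cylindrical chart after splitting off rho1 ln|z|).
   Encoding such functions as syntax trees, which are closed under partial
   differentiation, gives their smoothness and the chart components of dL and dH; then
   {L,H} = 0 is an identity of explicit functions.  In a hemisphere chart dL /\ dH = 0
   forces x = y = u = v = 0.  In the cylindrical chart a combination of two coefficients
   of dL /\ dH equals rho1 S / 2 + rho2 z^2 (cos th u + sin th v)^2 / (2 S) > 0, where
   S = sqrt (1 - z^2), so dL /\ dH vanishes nowhere there, in particular nowhere on Z. *)

From Pilot Require Import Defs.
From Stdlib Require Import Reals List Lra Psatz.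
From Coquelicot Require Import Coquelicot.
Open Scope R_scope.
(* [Reals] also exports a constant [d1]; re-import so that [d1] is the [dir4] constructor. *)
Import Defs.

Inductive term :=
  | TVar (i : dir4) | TCst (c : R) | TAdd (u w : term) | TMul (u w : term)
  | TLn (u : term) | TSqrt (u : term) | TInv (u : term) | TCos (u : term) | TSin (u : term).

Definition coord (i : dir4) (a b c d : R) : R :=
  match i with d1 => a | d2 => b | d3 => c | d4 => d end.

Fixpoint eval (e : term) : fn4 :=
  match e with
  | TVar i => coord i
  | TCst k => fun _ _ _ _ => k
  | TAdd u w => fun a b c d => eval u a b c d + eval w a b c d
  | TMul u w => fun a b c d => eval u a b c d * eval w a b c d
  | TLn u => fun a b c d => ln (eval u a b c d)
  | TSqrt u => fun a b c d => sqrt (eval u a b c d)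
  | TInv u => fun a b c d => / eval u a b c d
  | TCos u => fun a b c d => cos (eval u a b c d)
  | TSin u => fun a b c d => sin (eval u a b c d)
  end.

Fixpoint defined (e : term) (a b c d : R) : Prop :=
  match e with
  | TVar _ | TCst _ => True
  | TAdd u w | TMul u w => defined u a b c d /\ defined w a b c d
  | TLn u | TSqrt u => defined u a b c d /\ 0 < eval u a b c d
  | TInv u => defined u a b c d /\ eval u a b c d <> 0
  | TCos u | TSin u => defined u a b c d
  end.

Definition dir4_eqb (i j : dir4) : bool :=
  match i, j with d1, d1 | d2, d2 | d3, d3 | d4, d4 => true | _, _ => false end.

Fixpoint deriv (i : dir4) (e : term) : term :=
  match e with
  | TVar j => TCst (if dir4_eqb i j then 1 else 0)
  | TCst _ => TCst 0
  | TAdd u w => TAdd (deriv i u) (deriv i w)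
  | TMul u w => TAdd (TMul (deriv i u) w) (TMul u (deriv i w))
  | TLn u => TMul (deriv i u) (TInv u)
  | TSqrt u => TMul (deriv i u) (TInv (TMul (TCst 2) (TSqrt u)))
  | TInv u => TMul (TCst (-1)) (TMul (deriv i u) (TInv (TMul u u)))
  | TCos u => TMul (TCst (-1)) (TMul (deriv i u) (TSin u))
  | TSin u => TMul (deriv i u) (TCos u)
  end.

Lemma defined_deriv i e a b c d : defined e a b c d -> defined (deriv i e) a b c d.
Proof.
  induction e; cbn; intuition.
  - lra.
  - pose proof (sqrt_lt_R0 _ H1); lra.
  - apply Rmult_integral in H2; tauto.
Qed.

(* Written so that [line i] commutes with [eval] by conversion even for a variable [i]. *)
Definition line {T} (i : dir4) (f : R -> R -> R -> R -> T) (a b c d : R) (s : R) : T :=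
  let at_ j := if dir4_eqb i j then s else coord j a b c d in
  f (at_ d1) (at_ d2) (at_ d3) (at_ d4).

Lemma pd_line i f a b c d : pd i f a b c d = Derive (line i f a b c d) (coord i a b c d).
Proof. now destruct i. Qed.

Lemma ex_pd_line i f a b c d :
  ex_pd i f a b c d = ex_derive (line i f a b c d) (coord i a b c d).
Proof. now destruct i. Qed.

Lemma line_coord {T} i (f : R -> R -> R -> R -> T) a b c d :
  line i f a b c d (coord i a b c d) = f a b c d.
Proof. now destruct i. Qed.

Lemma is_derive_eq_value (f : R -> R) x l l' : is_derive f x l -> l = l' -> is_derive f x l'.
Proof. now intros H <-. Qed.

Lemma is_derive_eval i e a b c d : defined e a b c d ->
  is_derive (line i (eval e) a b c d) (coord i a b c d) (eval (deriv i e) a b c d).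
Proof.
  induction e as [j | k | u IHu w IHw | u IHu w IHw | u IHu | u IHu | u IHu | u IHu | u IHu];
    cbn [defined]; intros Hd.
  - destruct i, j; unfold line; cbn;
      first [exact (is_derive_id _) | exact (is_derive_const _ _)].
  - exact (is_derive_const _ _).
  - destruct Hd as [Hu Hw].
    exact (is_derive_plus _ _ _ _ _ (IHu Hu) (IHw Hw)).
  - destruct Hd as [Hu Hw]. eapply is_derive_eq_value.
    + exact (is_derive_mult _ _ _ _ _ (IHu Hu) (IHw Hw) Rmult_comm).
    + rewrite !line_coord. reflexivity.
  - destruct Hd as [Hu Hpos]. eapply is_derive_eq_value.
    + apply (is_derive_comp ln (line i (eval u) a b c d)); [| exact (IHu Hu)].
      rewrite line_coord. exact (is_derive_ln _ Hpos).
    + reflexivity.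
  - destruct Hd as [Hu Hpos]. eapply is_derive_eq_value.
    + apply (is_derive_sqrt (line i (eval u) a b c d)); [exact (IHu Hu) | now rewrite line_coord].
    + rewrite line_coord. reflexivity.
  - destruct Hd as [Hu Hnz]. eapply is_derive_eq_value.
    + apply (is_derive_inv (line i (eval u) a b c d)); [exact (IHu Hu) | now rewrite line_coord].
    + rewrite line_coord. cbn. field. exact Hnz.
  - eapply is_derive_eq_value.
    + exact (is_derive_comp _ _ _ _ _ (is_derive_cos _) (IHu Hd)).
    + rewrite line_coord. cbn. ring.
  - eapply is_derive_eq_value.
    + exact (is_derive_comp _ _ _ _ _ (is_derive_sin _) (IHu Hd)).
    + rewrite line_coord. cbn. ring.
Qed.

Lemma cont4_comp (g : R -> R) (f : fn4) a b c d :
  continuous g (f a b c d) -> cont4_at f a b c d ->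
  cont4_at (fun a b c d => g (f a b c d)) a b c d.
Proof.
  intros Hg Hf eps Heps.
  destruct (proj1 (filterlim_locally g _) Hg (mkposreal eps Heps)) as [del Hdel].
  destruct (Hf del (cond_pos del)) as [r [Hr Hfr]].
  exists r; split; [exact Hr |]. intros; apply Hdel, Hfr; assumption.
Qed.

Lemma cont4_comp2 (h : R -> R -> R) (f g : fn4) a b c d :
  filterlim (fun p : R * R => h (fst p) (snd p))
    (filter_prod (locally (f a b c d)) (locally (g a b c d)))
    (locally (h (f a b c d) (g a b c d))) ->
  cont4_at f a b c d -> cont4_at g a b c d ->
  cont4_at (fun a b c d => h (f a b c d) (g a b c d)) a b c d.
Proof.
  intros Hh Hf Hg eps Heps.
  destruct (proj1 (filterlim_locally _ _) Hh (mkposreal eps Heps))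
    as [P Q [eP HP] [eQ HQ] HPQ].
  destruct (Hf eP (cond_pos eP)) as [rf [Hrf Hf']].
  destruct (Hg eQ (cond_pos eQ)) as [rg [Hrg Hg']].
  exists (Rmin rf rg); split; [now apply Rmin_pos |].
  intros a' b' c' d' Ha Hb Hc Hd.
  pose proof (Rmin_l rf rg); pose proof (Rmin_r rf rg).
  apply (HPQ (f a' b' c' d') (g a' b' c' d')); [apply HP, Hf' | apply HQ, Hg']; lra.
Qed.

Lemma cont4_eval e a b c d : defined e a b c d -> cont4_at (eval e) a b c d.
Proof.
  induction e; cbn [defined]; intros Hd.
  - intros eps Heps; exists eps; split; [exact Heps |].
    intros; destruct i; cbn; rewrite ?Rminus_eq_0, ?Rabs_R0; assumption.
  - intros eps Heps; exists 1; split; [lra |].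
    intros; cbn; rewrite Rminus_eq_0, Rabs_R0; exact Heps.
  - destruct Hd as [Hu Hw].
    exact (cont4_comp2 Rplus _ _ _ _ _ _ (filterlim_plus _ _) (IHe1 Hu) (IHe2 Hw)).
  - destruct Hd as [Hu Hw].
    exact (cont4_comp2 Rmult _ _ _ _ _ _ (filterlim_mult _ _) (IHe1 Hu) (IHe2 Hw)).
  - destruct Hd as [Hu Hpos]. exact (cont4_comp ln _ _ _ _ _ (continuous_ln _ Hpos) (IHe Hu)).
  - destruct Hd as [Hu _]. exact (cont4_comp sqrt _ _ _ _ _ (continuous_sqrt _) (IHe Hu)).
  - destruct Hd as [Hu Hnz].
    exact (cont4_comp Rinv _ _ _ _ _ (continuous_Rinv _ Hnz) (IHe Hu)).
  - exact (cont4_comp cos _ _ _ _ _ (continuous_cos _) (IHe Hd)).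
  - exact (cont4_comp sin _ _ _ _ _ (continuous_sin _) (IHe Hd)).
Qed.

Definition open4 (U : set4) : Prop := forall a b c d, U a b c d ->
  exists r, 0 < r /\ forall a' b' c' d', box4 a b c d r a' b' c' d' -> U a' b' c' d'.

Lemma box4_center a b c d r : 0 < r -> box4 a b c d r a b c d.
Proof. intros; unfold box4; rewrite !Rminus_eq_0, !Rabs_R0; tauto. Qed.

Lemma line_box4 i (P : R -> R -> R -> R -> Prop) a b c d r : 0 < r ->
  (forall a' b' c' d', box4 a b c d r a' b' c' d' -> P a' b' c' d') ->
  locally (coord i a b c d) (line i P a b c d).
Proof.
  intros Hr H. exists (mkposreal r Hr). intros s Hs. change (Rabs (s - coord i a b c d) < r) in Hs.
  destruct i; apply H; unfold box4; cbn in *; rewrite ?Rminus_eq_0, ?Rabs_R0; tauto.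
Qed.

Lemma cont4_ext (f g : fn4) a b c d r : 0 < r ->
  (forall a' b' c' d', box4 a b c d r a' b' c' d' -> f a' b' c' d' = g a' b' c' d') ->
  cont4_at g a b c d -> cont4_at f a b c d.
Proof.
  intros Hr Hfg Hg eps Heps. destruct (Hg eps Heps) as [del [Hdel Hg']].
  exists (Rmin del r); split; [now apply Rmin_pos |].
  intros a' b' c' d' Ha Hb Hc Hd.
  pose proof (Rmin_l del r); pose proof (Rmin_r del r).
  rewrite (Hfg a' b' c' d'), (Hfg a b c d).
  - apply Hg'; lra.
  - now apply box4_center.
  - unfold box4; repeat split; lra.
Qed.

Definition represents (U : set4) (e : term) (f : fn4) : Prop :=
  forall a b c d, U a b c d -> defined e a b c d /\ f a b c d = eval e a b c d.

Fixpoint iter_deriv (l : list dir4) (e : term) : term :=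
  match l with nil => e | i :: l' => deriv i (iter_deriv l' e) end.

Lemma cont4_is_lim (f : fn4) i a b c d : cont4_at f a b c d ->
  is_lim (line i f a b c d) (coord i a b c d) (f a b c d).
Proof.
  intros Hf. apply is_lim_spec. intros eps.
  destruct (Hf eps (cond_pos eps)) as [del [Hdel Hf']].
  exists (mkposreal del Hdel). intros s Hs _. change (Rabs (s - coord i a b c d) < del) in Hs.
  destruct i; cbn in *; apply Hf'; rewrite ?Rminus_eq_0, ?Rabs_R0; assumption.
Qed.

Section OpenSet.

Variable U : set4.
Hypothesis U_open : open4 U.

Lemma pd_represented e f i a b c d : represents U e f -> U a b c d ->
  pd i f a b c d = eval (deriv i e) a b c d.
Proof.
  intros Hef Habcd. destruct (U_open a b c d Habcd) as [r [Hr Hbox]].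
  rewrite pd_line, (Derive_ext_loc _ (line i (eval e) a b c d)).
  - exact (is_derive_unique _ _ _ (is_derive_eval i e a b c d (proj1 (Hef _ _ _ _ Habcd)))).
  - apply (line_box4 i (fun a b c d => f a b c d = eval e a b c d) a b c d r Hr).
    intros; apply Hef, Hbox; assumption.
Qed.

Lemma represents_iter_pd e f l : represents U e f ->
  represents U (iter_deriv l e) (iter_pd l f).
Proof.
  intros Hef. induction l as [| i l IH]; [exact Hef |].
  intros a b c d Habcd. split.
  - apply defined_deriv, IH, Habcd.
  - exact (pd_represented _ _ i _ _ _ _ IH Habcd).
Qed.

Lemma smooth_on_represented e f : represents U e f -> smooth_on U f.
Proof.
  intros Hef l a b c d Habcd.
  pose proof (represents_iter_pd e f l Hef) as Hl.
  destruct (U_open a b c d Habcd) as [r [Hr Hbox]].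
  assert (Hdef : defined (iter_deriv l e) a b c d) by apply (Hl _ _ _ _ Habcd).
  split.
  - apply (cont4_ext _ (eval (iter_deriv l e)) a b c d r Hr).
    + intros; apply Hl, Hbox; assumption.
    + exact (cont4_eval _ _ _ _ _ Hdef).
  - intros i. rewrite ex_pd_line.
    apply (ex_derive_ext_loc (line i (eval (iter_deriv l e)) a b c d)).
    + apply (line_box4 i (fun a b c d => eval (iter_deriv l e) a b c d = iter_pd l f a b c d)
               a b c d r Hr).
      intros; symmetry; apply Hl, Hbox; assumption.
    + eexists; exact (is_derive_eval i _ _ _ _ _ Hdef).
Qed.

Lemma bpd_z_represented e f th t u v : represents U e f -> U th t u v ->
  bpd_z f th t u v = t * eval (deriv d2 e) th t u v.
Proof.
  intros Hef Hp. destruct (U_open _ _ _ _ Hp) as [r [Hr Hbox]].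
  set (g := TMul (TVar d2) (deriv d2 e)).
  assert (Hg : defined g th t u v) by (split; [exact I | apply defined_deriv, Hef, Hp]).
  unfold bpd_z. rewrite (is_lim_unique _ _ (eval g th t u v)); [reflexivity |].
  apply (is_lim_ext_loc (line d2 (eval g) th t u v)).
  - unfold Rbar_locally', locally', within. eapply filter_imp; [intros s Hs _; exact Hs |].
    apply (line_box4 d2 (fun a b c d => eval g a b c d = b * pd d2 f a b c d) th t u v r Hr).
    intros a b c d Hb. cbn. f_equal. symmetry.
    exact (pd_represented e f d2 a b c d Hef (Hbox _ _ _ _ Hb)).
  - exact (cont4_is_lim _ d2 _ _ _ _ (cont4_eval _ _ _ _ _ Hg)).
Qed.

End OpenSet.

Lemma smooth_on_subset (U W : set4) f :
  (forall a b c d, W a b c d -> U a b c d) -> smooth_on U f -> smooth_on W f.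
Proof. intros HWU Hf l a b c d Hw. exact (Hf l a b c d (HWU _ _ _ _ Hw)). Qed.

Lemma open4_True : open4 (fun _ _ _ _ => True).
Proof. intros; exists 1; split; [lra | tauto]. Qed.

Lemma open4_eval_pos (U : set4) e : (forall a b c d, defined e a b c d) ->
  (forall a b c d, U a b c d <-> 0 < eval e a b c d) -> open4 U.
Proof.
  intros He HU a b c d Habcd. apply HU in Habcd.
  destruct (cont4_eval e a b c d (He a b c d) _ Habcd) as [del [Hdel Hcont]].
  exists del; split; [exact Hdel |]. intros a' b' c' d' [Ha [Hb [Hc Hd]]].
  apply HU. specialize (Hcont a' b' c' d' Ha Hb Hc Hd). apply Rabs_def2 in Hcont. lra.
Qed.

Definition TSqr (u : term) : term := TMul u u.
Definition TSub (u w : term) : term := TAdd u (TMul (TCst (-1)) w).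

Definition hemi_q : term := TSub (TSub (TCst 1) (TSqr (TVar d1))) (TSqr (TVar d2)).
Definition cyl_root : term := TSqrt (TSub (TCst 1) (TSqr (TVar d2))).
Definition osc_term (rho2 : R) : term :=
  TMul (TCst (rho2 / 2)) (TAdd (TSqr (TVar d3)) (TSqr (TVar d4))).

(* On a hemisphere [|z| = sqrt (1 - x^2 - y^2)]. *)
Definition hemi_L_term (rho1 rho2 : R) : term :=
  TAdd (TMul (TCst rho1) (TLn (TSqrt hemi_q))) (osc_term rho2).
Definition hemi_H_term : term :=
  TMul (TCst (/ 2)) (TAdd (TMul (TVar d1) (TVar d3)) (TMul (TVar d2) (TVar d4))).
Definition cyl_H_term : term :=
  TMul (TCst (/ 2)) (TAdd (TMul (TMul cyl_root (TCos (TVar d1))) (TVar d3))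
                          (TMul (TMul cyl_root (TSin (TVar d1))) (TVar d4))).

Lemma hemi_dom_open : open4 hemi_dom.
Proof.
  apply (open4_eval_pos _ hemi_q); [cbn; tauto |].
  intros; unfold hemi_dom; cbn; split; intro; lra.
Qed.

Lemma cyl_dom_iff th t u v : cyl_dom th t u v <-> 0 < 1 - t ^ 2.
Proof.
  unfold cyl_dom. split; intro Ht.
  - apply Rabs_def2 in Ht. nra.
  - apply Rabs_def1; nra.
Qed.

Lemma cyl_dom_open : open4 cyl_dom.
Proof.
  apply (open4_eval_pos _ (TSub (TCst 1) (TSqr (TVar d2)))); [cbn; tauto |].
  intros; rewrite cyl_dom_iff; cbn; split; intro; lra.
Qed.

Lemma represents_hemi_L rho1 rho2 s : (s = 1 \/ s = -1) ->
  represents hemi_dom (hemi_L_term rho1 rho2) (hemi s (Lso rho1 rho2)).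
Proof.
  intros Hs a b u v Hab. unfold hemi_dom in Hab.
  assert (Hq : eval hemi_q a b u v = 1 - a ^ 2 - b ^ 2) by (cbn; ring).
  assert (Hs1 : Rabs s = 1) by (unfold Rabs; destruct Rcase_abs; lra).
  cbn [defined eval hemi_L_term osc_term TSqr coord]. rewrite Hq. split.
  - assert (defined hemi_q a b u v) by (cbn; tauto).
    pose proof (sqrt_lt_R0 (1 - a ^ 2 - b ^ 2)).
    repeat split; auto; lra.
  - unfold hemi, Lso.
    rewrite Rabs_mult, Hs1, Rmult_1_l, Rabs_pos_eq by apply sqrt_pos. ring.
Qed.

Lemma represents_hemi_H s : represents (fun _ _ _ _ => True) hemi_H_term (hemi s Hso).
Proof. intros a b u v _. split; [cbn; tauto | unfold hemi, Hso; cbn; ring]. Qed.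

Lemma represents_cyl_H : represents cyl_dom cyl_H_term (cyl Hso).
Proof.
  intros th t u v Ht. rewrite cyl_dom_iff in Ht. split.
  - cbn. repeat split; lra.
  - assert (Hr : eval cyl_root th t u v = sqrt (1 - t ^ 2)) by (cbn; f_equal; ring).
    unfold cyl, Hso. cbn [eval cyl_H_term coord]. rewrite Hr. ring.
Qed.

Lemma represents_osc rho2 : represents (fun _ _ _ _ => True) (osc_term rho2) (eval (osc_term rho2)).
Proof. intros a b c d _. split; [cbn; tauto | reflexivity]. Qed.



Lemma cyl_Lso rho1 rho2 th t u v :
  cyl (Lso rho1 rho2) th t u v = rho1 * ln (Rabs t) + eval (osc_term rho2) th t u v.
Proof. unfold cyl, Lso; cbn. ring. Qed.

Lemma is_bfun_Lso rho1 rho2 : is_bfun (Lso rho1 rho2).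
Proof.
  split.
  - intros s Hs.
    exact (smooth_on_represented _ hemi_dom_open _ _ (represents_hemi_L rho1 rho2 s Hs)).
  - intros th t u v _. exists 1; split; [lra |]. exists rho1, (eval (osc_term rho2)). split.
    + apply (smooth_on_subset (fun _ _ _ _ => True)); [tauto |].
      exact (smooth_on_represented _ open4_True _ _ (represents_osc rho2)).
    + intros; apply cyl_Lso.
Qed.

Lemma is_bfun_Hso : is_bfun Hso.
Proof.
  split.
  - intros s _. apply (smooth_on_subset (fun _ _ _ _ => True)); [tauto |].
    exact (smooth_on_represented _ open4_True _ _ (represents_hemi_H s)).
  - intros th t u v _. exists 1; split; [lra |]. exists 0, (cyl Hso). split.
    + apply (smooth_on_subset cyl_dom); [tauto |].
      exact (smooth_on_represented _ cyl_dom_open _ _ represents_cyl_H).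
    + intros; ring.
Qed.

Definition hemi_dL (rho1 rho2 a b u v : R) (i : dir4) : R :=
  match i with
  | d1 => - rho1 * a / (1 - a ^ 2 - b ^ 2) | d2 => - rho1 * b / (1 - a ^ 2 - b ^ 2)
  | d3 => rho2 * u | d4 => rho2 * v
  end.
Definition hemi_dH (a b u v : R) (i : dir4) : R :=
  match i with d1 => u / 2 | d2 => v / 2 | d3 => a / 2 | d4 => b / 2 end.
Definition cyl_dL (rho1 rho2 u v : R) (i : dir4) : R :=
  match i with d1 => 0 | d2 => rho1 | d3 => rho2 * u | d4 => rho2 * v end.
Definition cyl_dH (th t u v : R) (i : dir4) : R :=
  match i with
  | d1 => sqrt (1 - t ^ 2) * (- sin th * u + cos th * v) / 2
  | d2 => - t ^ 2 * (cos th * u + sin th * v) / (2 * sqrt (1 - t ^ 2))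
  | d3 => sqrt (1 - t ^ 2) * cos th / 2
  | d4 => sqrt (1 - t ^ 2) * sin th / 2
  end.

Lemma hcomp_hemi_L rho1 rho2 s a b u v : (s = 1 \/ s = -1) -> hemi_dom a b u v ->
  forall i, hcomp (hemi s (Lso rho1 rho2)) a b u v i = hemi_dL rho1 rho2 a b u v i.
Proof.
  intros Hs Hab i. unfold hcomp.
  rewrite (pd_represented _ hemi_dom_open _ _ i _ _ _ _ (represents_hemi_L rho1 rho2 s Hs) Hab).
  unfold hemi_dom in Hab.
  assert (HS : 0 < sqrt (1 - a ^ 2 - b ^ 2)) by (apply sqrt_lt_R0; lra).
  assert (HSS : sqrt (1 - a ^ 2 - b ^ 2) * sqrt (1 - a ^ 2 - b ^ 2) = 1 - a ^ 2 - b ^ 2)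
    by (apply sqrt_sqrt; lra).
  destruct i; cbn [deriv hemi_L_term hemi_q osc_term TSub TSqr eval coord dir4_eqb hemi_dL];
    replace (1 + -1 * (a * a) + -1 * (b * b)) with (1 - a ^ 2 - b ^ 2) by ring;
    set (S := sqrt (1 - a ^ 2 - b ^ 2)) in *; try rewrite <- HSS; field; lra.
Qed.

Lemma hcomp_hemi_H s a b u v : forall i, hcomp (hemi s Hso) a b u v i = hemi_dH a b u v i.
Proof.
  intros i. unfold hcomp.
  rewrite (pd_represented _ open4_True _ _ i _ _ _ _ (represents_hemi_H s) I).
  destruct i; cbn; field.
Qed.

Lemma is_derive_ln_abs x : x <> 0 -> is_derive (fun r => ln (Rabs r)) x (/ x).
Proof.
  intros Hx. apply (is_derive_ext (fun r => ln (sqrt (r * r)))).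
  - intros r. now rewrite <- sqrt_Rsqr_abs.
  - assert (Hxx : 0 < x * x) by nra.
    pose proof (sqrt_lt_R0 _ Hxx) as HS. pose proof (sqrt_sqrt _ (Rlt_le _ _ Hxx)) as HSS.
    auto_derive; [tauto |].
    set (S := sqrt (x * x)) in *.
    replace (/ x) with (x * / (x * x)) by (field; exact Hx).
    rewrite <- HSS. field. lra.
Qed.

Lemma locally'_nonzero t : locally' t (fun y => y <> 0).
Proof.
  destruct (Req_dec t 0) as [-> | Ht].
  - exists (mkposreal 1 Rlt_0_1). intros y _ Hy. exact Hy.
  - exists (mkposreal _ (Rabs_pos_lt _ Ht)). intros y Hy _ ->.
    change (Rabs (0 - t) < Rabs t) in Hy. rewrite Rminus_0_l, Rabs_Ropp in Hy. lra.
Qed.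

Lemma bpd_z_cyl_Lso rho1 rho2 th t u v : bpd_z (cyl (Lso rho1 rho2)) th t u v = rho1.
Proof.
  unfold bpd_z. rewrite (is_lim_unique _ _ rho1); [reflexivity |].
  apply (is_lim_ext_loc (fun _ => rho1)); [| apply is_lim_const].
  apply (filter_imp (fun y => y <> 0)); [| exact (locally'_nonzero t)].
  intros y Hy. unfold cyl, Lso.
  rewrite (is_derive_unique _ _ (rho1 * / y + 0)); [field; exact Hy |].
  apply (is_derive_plus (fun r => rho1 * ln (Rabs r)) (fun _ => rho2 / 2 * (u ^ 2 + v ^ 2))).
  - exact (is_derive_scal _ _ _ _ (is_derive_ln_abs y Hy)).
  - exact (is_derive_const _ _).
Qed.

Lemma ccomp_cyl_L rho1 rho2 th t u v :
  forall i, ccomp (cyl (Lso rho1 rho2)) th t u v i = cyl_dL rho1 rho2 u v i.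
Proof.
  intros i. destruct i; unfold ccomp, cyl_dL; [| apply bpd_z_cyl_Lso | |];
    unfold pd, cyl, Lso; apply is_derive_unique; auto_derive; auto; field.
Qed.

Lemma ccomp_cyl_H th t u v : cyl_dom th t u v ->
  forall i, ccomp (cyl Hso) th t u v i = cyl_dH th t u v i.
Proof.
  intros Ht i. unfold ccomp.
  assert (Hpos : 0 < 1 - t ^ 2) by exact (proj1 (cyl_dom_iff th t u v) Ht).
  assert (HS : 0 < sqrt (1 - t ^ 2)) by (apply sqrt_lt_R0; lra).
  assert (HSS : sqrt (1 - t ^ 2) * sqrt (1 - t ^ 2) = 1 - t ^ 2) by (apply sqrt_sqrt; lra).
  destruct i;
    [ rewrite (pd_represented _ cyl_dom_open _ _ _ _ _ _ _ represents_cyl_H Ht)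
    | rewrite (bpd_z_represented _ cyl_dom_open _ _ _ _ _ _ represents_cyl_H Ht)
    | rewrite (pd_represented _ cyl_dom_open _ _ _ _ _ _ _ represents_cyl_H Ht) ..];
    cbn [deriv cyl_H_term cyl_root TSub TSqr eval coord dir4_eqb cyl_dH];
    replace (1 + -1 * (t * t)) with (1 - t ^ 2) by ring;
    set (S := sqrt (1 - t ^ 2)) in *; try rewrite <- HSS; field; lra.
Qed.

Lemma hemi_bracket_LH rho1 rho2 s a b u v : rho1 <> 0 -> rho2 <> 0 ->
  (s = 1 \/ s = -1) -> hemi_dom a b u v ->
  br (omega_hem rho1 a b) rho2
     (hcomp (hemi s (Lso rho1 rho2)) a b u v) (hcomp (hemi s Hso) a b u v) = 0.
Proof.
  intros H1 H2 Hs Hab. unfold br, omega_hem.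
  rewrite !(hcomp_hemi_L rho1 rho2 s a b u v Hs Hab), !hcomp_hemi_H. cbn [hemi_dL hemi_dH].
  unfold hemi_dom in Hab. field. repeat split; lra.
Qed.

Lemma cyl_bracket_LH rho1 rho2 th t u v : rho1 <> 0 -> rho2 <> 0 -> cyl_dom th t u v ->
  br (omega_cyl rho1) rho2
     (ccomp (cyl (Lso rho1 rho2)) th t u v) (ccomp (cyl Hso) th t u v) = 0.
Proof.
  intros H1 H2 Ht. unfold br, omega_cyl.
  rewrite !ccomp_cyl_L, !(ccomp_cyl_H th t u v Ht). cbn [cyl_dL cyl_dH].
  assert (HS : 0 < sqrt (1 - t ^ 2)) by (apply sqrt_lt_R0, (cyl_dom_iff th t u v), Ht).
  set (S := sqrt (1 - t ^ 2)) in *. field. repeat split; lra.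
Qed.

Lemma sum_sq_eq0 p k x y : 0 < p -> 0 < k -> p * (x * x) + k * (y * y) = 0 -> x = 0 /\ y = 0.
Proof.
  intros Hp Hk E.
  assert (Hx : x * x = 0) by nra. assert (Hy : y * y = 0) by nra.
  apply Rmult_integral in Hx, Hy. tauto.
Qed.

Lemma hemi_wedge_zero_origin rho1 rho2 s a b u v : 0 < rho1 -> 0 < rho2 ->
  (s = 1 \/ s = -1) -> hemi_dom a b u v ->
  wedge_zero (hcomp (hemi s (Lso rho1 rho2)) a b u v) (hcomp (hemi s Hso) a b u v) ->
  a = 0 /\ b = 0 /\ u = 0 /\ v = 0.
Proof.
  intros H1 H2 Hs Hab W.
  pose proof (W d1 d3) as W13. pose proof (W d2 d4) as W24.
  rewrite !(hcomp_hemi_L rho1 rho2 s a b u v Hs Hab), !hcomp_hemi_H in W13, W24.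
  cbn [hemi_dL hemi_dH] in W13, W24.
  unfold hemi_dom in Hab. set (q := 1 - a ^ 2 - b ^ 2) in *.
  assert (Hq : 0 < q) by (unfold q; lra).
  assert (E13 : rho1 * (a * a) + rho2 * q * (u * u) = 0).
  { rewrite <- (Rmult_0_r (-2 * q)), <- W13. field. lra. }
  assert (E24 : rho1 * (b * b) + rho2 * q * (v * v) = 0).
  { rewrite <- (Rmult_0_r (-2 * q)), <- W24. field. lra. }
  apply sum_sq_eq0 in E13; [| lra | nra]. apply sum_sq_eq0 in E24; [| lra | nra]. tauto.
Qed.

Lemma cyl_wedge_nonzero rho1 rho2 th t u v : 0 < rho1 -> 0 < rho2 -> cyl_dom th t u v ->
  ~ wedge_zero (ccomp (cyl (Lso rho1 rho2)) th t u v) (ccomp (cyl Hso) th t u v).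
Proof.
  intros H1 H2 Ht W.
  pose proof (W d2 d3) as W3. pose proof (W d2 d4) as W4.
  rewrite !ccomp_cyl_L, !(ccomp_cyl_H th t u v Ht) in W3, W4.
  cbn [cyl_dL cyl_dH] in W3, W4.
  assert (HS : 0 < sqrt (1 - t ^ 2)) by (apply sqrt_lt_R0, (cyl_dom_iff th t u v), Ht).
  set (S := sqrt (1 - t ^ 2)) in *. set (w := cos th * u + sin th * v) in *.
  assert (E : rho1 * S * S * (sin th ^ 2 + cos th ^ 2) + rho2 * t ^ 2 * (w * w)
              = 2 * S * (cos th * (rho1 * (S * cos th / 2) - rho2 * u * (- t ^ 2 * w / (2 * S)))
                       + sin th * (rho1 * (S * sin th / 2) - rho2 * v * (- t ^ 2 * w / (2 * S)))))
    by (unfold w; field; lra).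
  pose proof (sin2_cos2 th) as SC. rewrite !Rsqr_pow2 in SC.
  rewrite W3, W4, SC in E.
  assert (0 < rho1 * S * S) by (repeat apply Rmult_lt_0_compat; assumption).
  assert (0 <= rho2 * t ^ 2 * (w * w)) by (apply Rmult_le_pos; nra).
  lra.
Qed.

Lemma null4_subset_point (S : set4) p1 p2 p3 p4 :
  (forall a b c d, S a b c d -> a = p1 /\ b = p2 /\ c = p3 /\ d = p4) -> null4 S.
Proof.
  intros HS eps Heps.
  exists (fun _ => p1), (fun _ => p1), (fun _ => p2), (fun _ => p2),
         (fun _ => p3), (fun _ => p3), (fun _ => p4), (fun _ => p4).
  split; [intros; lra |]. split.
  - intros N. rewrite sum_eq_R0; [lra | intros; ring].
  - intros a b c d Habcd. apply HS in Habcd. exists 0%nat. lra.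
Qed.

Lemma null3_empty (S : set3) : (forall a b c, ~ S a b c) -> null3 S.
Proof.
  intros HS eps Heps.
  exists (fun _ => 0), (fun _ => 0), (fun _ => 0), (fun _ => 0), (fun _ => 0), (fun _ => 0).
  split; [intros; lra |]. split.
  - intros N. rewrite sum_eq_R0; [lra | intros; ring].
  - intros a b c Habc. exfalso; exact (HS a b c Habc).
Qed.

Theorem lemma4p2 (rho1 rho2 : R) (h1 : 0 < rho1) (h2 : 0 < rho2) :
  b_integrable rho1 rho2 (Lso rho1 rho2) Hso.
Proof.
  split; [apply is_bfun_Lso |]. split; [apply is_bfun_Hso |].
  split; [| split; [| split; [| split]]].
  - intros s Hs a b u v Hab. apply hemi_bracket_LH; auto; lra.
  - intros th t u v Ht. apply cyl_bracket_LH; auto; lra.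
  - intros s Hs. apply (null4_subset_point _ 0 0 0 0).
    intros a b u v [Hab W]. exact (hemi_wedge_zero_origin rho1 rho2 s a b u v h1 h2 Hs Hab W).
  - apply (null4_subset_point _ 0 0 0 0).
    intros th t u v [Ht W]. exfalso. exact (cyl_wedge_nonzero rho1 rho2 th t u v h1 h2 Ht W).
  - apply null3_empty. intros th u v W.
    apply (cyl_wedge_nonzero rho1 rho2 th 0 u v h1 h2); [| exact W].
    unfold cyl_dom; rewrite Rabs_R0; lra.
Qed.
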